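(* Let $e(\tau,s)$ be a complete equation of state and let $s_0$ be fixed. Assume the energy isentrope $\tau\mapsto e_{s_0}(\tau):=e(\tau,s_0)$ is convex on $(0,\infty)$. For $\bm u=(\rho,\bm m,E)\in\mathbb R\times\mathbb R^d\times\mathbb R$ with $\rho>0$, set $\tau(\bm u)=\rho^{-1}$ and $\mathsf e(\bm u)=\rho^{-1}E-\tfrac12\|\rho^{-1}\bm m\|_{\ell^2}^2$. Then the functional $$\bm u\longmapsto \rho\,\mathsf e(\bm u)-\rho\, e_{s_0}(\tau(\bm u))$$ is a concave function of $\bm u$ on $\{\rho>0\}$.
   Context: A complete equation of state is a function $e(\tau,s)$ giving the specific internal energy in terms of specific volume $\tau>0$ and specific entropy $s$; the pressure is $p=-\partial_\tau e$ and the temperature $T=\partial_s e$. The ''energy isentrope'' at entropy $s$ is the one-variable function $\tau\mapsto e(\tau,s)$. *)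

From mathcomp Require Import all_boot all_order all_algebra.
From mathcomp Require Import all_classical all_reals all_analysis.
Set Implicit Arguments. Unset Strict Implicit. Unset Printing Implicit Defensive.
Import Order.TTheory GRing.Theory Num.Theory.
Local Open Scope ring_scope.

(* A complete equation of state: e(tau, s), tau > 0, with partial
   derivatives p = -d_tau e and T = d_s e existing. *)
Definition complete_eos (R : realType) (e : R -> R -> R) : Prop :=
  forall tau s : R, 0 < tau ->
    derivable (fun t : R => e t s) tau 1 /\ derivable (fun s' : R => e tau s') s 1.

Definition convex_on_pos (R : realType) (f : R -> R) : Prop :=
  forall (x y t : R), 0 < x -> 0 < y -> 0 <= t <= 1 ->
    f ((1 - t) * x + t * y) <= (1 - t) * f x + t * f y.

Definition state (R : realType) (d : nat) : Type := (R * 'rV[R]_d * R)%type.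

Definition st_rho (R : realType) (d : nat) (u : state R d) : R := u.1.1.
Definition st_m (R : realType) (d : nat) (u : state R d) : 'rV[R]_d := u.1.2.
Definition st_E (R : realType) (d : nat) (u : state R d) : R := u.2.

Definition st_comb (R : realType) (d : nat) (t : R) (u v : state R d) : state R d :=
  ((1 - t) * st_rho u + t * st_rho v,
   (1 - t) *: st_m u + t *: st_m v,
   (1 - t) * st_E u + t * st_E v).

Definition tau_of (R : realType) (d : nat) (u : state R d) : R := (st_rho u)^-1.

Definition sqnorm (R : realType) (d : nat) (v : 'rV[R]_d) : R := \sum_(i < d) (v ord0 i) ^+ 2.

Definition int_energy (R : realType) (d : nat) (u : state R d) : R :=
  (st_rho u)^-1 * st_E u - 2^-1 * sqnorm ((st_rho u)^-1 *: st_m u).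

Definition concave_on_pos_rho (R : realType) (d : nat) (F : state R d -> R) : Prop :=
  forall (u v : state R d) (t : R), 0 < st_rho u -> 0 < st_rho v -> 0 <= t <= 1 ->
    (1 - t) * F u + t * F v <= F (st_comb t u v).

From mathcomp Require Import all_boot all_order all_algebra.
From mathcomp Require Import all_classical all_reals all_analysis.
From mathcomp Require Import ring lra.
Set Implicit Arguments. Unset Strict Implicit. Unset Printing Implicit Defensive.
Import Order.TTheory GRing.Theory Num.Theory.
Local Open Scope ring_scope.

(* Writing [rho e(u) = E - |m|^2 / (2 rho)], the functional is [E] minus
   [|m|^2 / (2 rho)] minus [rho e_{s0}(1/rho)].  The first is linear, the
   second is jointly convex in [(rho, m)] (quadratic over linear), and the
   third is convex in [rho] because [r |-> r f(1/r)] preserves convexity on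
   the positive half-line: with [r = (1-t) r1 + t r2] one has
   [1/r = (1-l)/r1 + l/r2] for the weight [l = t r2 / r]. *)

Lemma sqr_div_convex (R : realFieldType) (a b r1 r2 t : R) :
  0 < r1 -> 0 < r2 -> 0 <= t <= 1 ->
  ((1 - t) * a + t * b) ^+ 2 / ((1 - t) * r1 + t * r2)
  <= (1 - t) * (a ^+ 2 / r1) + t * (b ^+ 2 / r2).
Proof.
move=> r1_gt0 r2_gt0 /andP[t_ge0 t_le1].
have r_gt0 : 0 < (1 - t) * r1 + t * r2 by nra.
rewrite -subr_ge0.
have -> : (1 - t) * (a ^+ 2 / r1) + t * (b ^+ 2 / r2)
          - ((1 - t) * a + t * b) ^+ 2 / ((1 - t) * r1 + t * r2)
        = t * (1 - t) * (a * r2 - b * r1) ^+ 2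
          / (r1 * r2 * ((1 - t) * r1 + t * r2)).
  by field; rewrite !(gt_eqF r_gt0, gt_eqF r1_gt0, gt_eqF r2_gt0).
apply: divr_ge0; first by rewrite mulr_ge0 ?sqr_ge0 // mulr_ge0 // subr_ge0.
by rewrite !mulr_ge0 // ltW.
Qed.

Lemma sqnorm_div_convex (R : realType) (d : nat) (m1 m2 : 'rV[R]_d)
    (r1 r2 t : R) :
  0 < r1 -> 0 < r2 -> 0 <= t <= 1 ->
  sqnorm ((1 - t) *: m1 + t *: m2) / ((1 - t) * r1 + t * r2)
  <= (1 - t) * (sqnorm m1 / r1) + t * (sqnorm m2 / r2).
Proof.
move=> r1_gt0 r2_gt0 t01.
rewrite /sqnorm !mulr_suml !mulr_sumr -big_split /=.
apply: ler_sum => i _; rewrite !mxE.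
exact: sqr_div_convex.
Qed.

Lemma convex_on_pos_mul_inv (R : realType) (f : R -> R) :
  convex_on_pos f -> convex_on_pos (fun r => r * f r^-1).
Proof.
move=> f_convex r1 r2 t r1_gt0 r2_gt0 /andP[t_ge0 t_le1].
set r := (1 - t) * r1 + t * r2.
have r_gt0 : 0 < r by rewrite /r; nra.
set l := t * r2 / r.
have l01 : 0 <= l <= 1.
  rewrite /l divr_ge0 ?(mulr_ge0 t_ge0 (ltW r2_gt0)) ?(ltW r_gt0) //=.
  by rewrite ler_pdivrMr // mul1r /r; nra.
have inv_r : r^-1 = (1 - l) * r1^-1 + l * r2^-1.
  by rewrite /l /r; field; rewrite -/r !(gt_eqF r_gt0, gt_eqF r1_gt0, gt_eqF r2_gt0).
have := f_convex r1^-1 r2^-1 l; rewrite !invr_gt0 -inv_r.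
move=> /(_ r1_gt0 r2_gt0 l01) /(ler_wpM2l (ltW r_gt0)).
have -> // : r * ((1 - l) * f r1^-1 + l * f r2^-1)
           = (1 - t) * (r1 * f r1^-1) + t * (r2 * f r2^-1).
by rewrite /l /r; field; rewrite -/r !(gt_eqF r_gt0, gt_eqF r1_gt0, gt_eqF r2_gt0).
Qed.

Lemma mul_rho_int_energy (R : realType) (d : nat) (u : state R d) :
  0 < st_rho u ->
  st_rho u * int_energy u = st_E u - 2^-1 * (sqnorm (st_m u) / st_rho u).
Proof.
move=> rho_gt0; rewrite /int_energy /sqnorm mulrBr mulrA mulfV ?gt_eqF // mul1r.
congr (_ - _); rewrite mulrCA; congr (_ * _).
rewrite mulr_suml mulr_sumr; apply: eq_bigr => i _.
by rewrite mxE; field; rewrite gt_eqF.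
Qed.

Theorem proposition2p8 (R : realType) (d : nat) (e : R -> R -> R) (s0 : R) :
  complete_eos e ->
  convex_on_pos (fun tau => e tau s0) ->
  concave_on_pos_rho
    (fun u : state R d => st_rho u * int_energy u - st_rho u * e (tau_of u) s0).
Proof.
move=> _ e_convex u v t rho_u rho_v t01.
have rho_uv : 0 < st_rho (st_comb t u v).
  by move: t01 => /andP[? ?]; rewrite /st_rho /=; nra.
rewrite !mul_rho_int_energy // /tau_of.
have kinetic := sqnorm_div_convex (st_m u) (st_m v) rho_u rho_v t01.
have internal := convex_on_pos_mul_inv e_convex rho_u rho_v t01.
have half_ge0 : (0 : R) <= 2^-1 by rewrite invr_ge0.
have -> : st_comb t u v = ((1 - t) * st_rho u + t * st_rho v,
    (1 - t) *: st_m u + t *: st_m v, (1 - t) * st_E u + t * st_E v) by [].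
move: internal (ler_wpM2l half_ge0 kinetic); rewrite /st_E /st_m /st_rho /=.
lra.
Qed.
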